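(* Let $D$ be a virtual knot diagram of a virtual knot. Then $D$ can be transformed into the trivial knot diagram by a finite sequence of (classical) Reidemeister moves, virtual Reidemeister moves, and forbidden detour moves. Moreover, if $D$ has $c$ real crossings, then this can be done using at most $\frac{(c-1)(2c^{2}+11c-3)}{24}$ forbidden detour moves if $c$ is odd, and at most $\frac{c(2c^{2}+9c-14)}{24}$ forbidden detour moves if $c$ is even.
   Context: Virtual knots are equivalence classes of virtual knot diagrams (planar diagrams with real (classical) crossings and virtual crossings) under classical Reidemeister moves and virtual Reidemeister moves; equivalently, equivalence classes of Gauss diagrams under the Gauss-diagram versions of the Reidemeister moves. The Gauss diagram of a diagram with $c$ real crossings is an oriented circle with $c$ signed arrows, one per real crossing, joining the two preimages of the crossing (oriented from the over-crossing preimage to the under-crossing preimage, signed by the local writhe of the crossing); virtual crossings are not recorded. A forbidden detour move (the $F_2'$-move of Kanenobu) is the local move on virtual knot diagrams whose effect on the Gauss diagram is the following: if the head of one arrow and the tail of a different arrow are adjacent on the circle (no other arrow endpoints between them), their positions are exchanged, with all signs kept. The trivial knot diagram is the diagram with no crossings. *)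

(* Virtual knot diagrams modulo virtual Reidemeister moves
   are encoded by their Gauss diagrams, written as cyclic Gauss words. *)
From mathcomp Require Import all_boot all_algebra.
Set Implicit Arguments. Unset Strict Implicit. Unset Printing Implicit Defensive.
Import GRing.Theory.

(* An arrow endpoint: (label, is_head, sign).  is_head = false : tail
   (over-crossing preimage), is_head = true : head (under-crossing preimage);
   sign = true : local writhe +1, sign = false : local writhe -1. *)
Definition letter := (nat * bool * bool)%type.
Definition gword := seq letter.

Definition lbl (e : letter) : nat := e.1.1.
Definition is_head (e : letter) : bool := e.1.2.
Definition sgnb (e : letter) : bool := e.2.

Definition tl (n : nat) (s : bool) : letter := (n, false, s).
Definition hd (n : nat) (s : bool) : letter := (n, true, s).

Definition labels (w : gword) : seq nat := map lbl w.

Definition gauss_word (w : gword) : Prop :=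
  forall n, n \in labels w ->
    exists s, [/\ count (pred1 (tl n s)) w = 1%N,
                  count (pred1 (hd n s)) w = 1%N &
                  count (fun e => lbl e == n) w = 2%N].

Definition trivial_gword : gword := [::].

Definition sgn (b : bool) : int := if b then 1%R else (-1)%R.

(* Three strands
   (top, middle, bottom) pairwise cross; arrow a : top -> middle,
   arrow b : top -> bottom, arrow c : middle -> bottom.  T, M, B are the
   2-letter fragments of the three strands (in the order met along the
   orientation).  A planar R3 triangle is given by its orientation tau and by
   alpha_i = whether strand i runs along the cyclic orientation A->B->C of the
   triangle (A = a, B = c, C = b as vertices); this determines both the
   order of endpoints on each fragment and the crossing signs. *)
Definition r3_triangle (T M B : gword) : Prop :=
  exists (a b c : nat) (ea eb ec tau al1 al2 al3 : bool),
    [/\ uniq [:: a; b; c],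
        (sgn ea = sgn tau * sgn al1 * sgn al2)%R,
        (sgn eb = - (sgn tau * sgn al1 * sgn al3))%R,
        (sgn ec = sgn tau * sgn al2 * sgn al3)%R &
      [/\ T = (if al1 then [:: tl b eb; tl a ea] else [:: tl a ea; tl b eb]),
          M = (if al2 then [:: hd a ea; tl c ec] else [:: tl c ec; hd a ea]) &
          B = (if al3 then [:: hd c ec; hd b eb] else [:: hd b eb; hd c ec])]].

Inductive rmove : gword -> gword -> Prop :=
| rm_rot w : rmove w (rot 1 w)
| rm_R1_del u v m s (h : bool) :
    rmove (u ++ [:: (m, h, s); (m, ~~ h, s)] ++ v) (u ++ v)
| rm_R1_ins u v m s (h : bool) : m \notin labels (u ++ v) ->
    rmove (u ++ v) (u ++ [:: (m, h, s); (m, ~~ h, s)] ++ v)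
| rm_R2_del u1 u2 u3 m n s (o p : bool) : m != n ->
    let X := [:: tl m s; tl n (~~ s)] in
    let Y := if o then [:: hd m s; hd n (~~ s)] else [:: hd n (~~ s); hd m s] in
    rmove (u1 ++ (if p then X else Y) ++ u2 ++ (if p then Y else X) ++ u3)
          (u1 ++ u2 ++ u3)
| rm_R2_ins u1 u2 u3 m n s (o p : bool) : m != n ->
    m \notin labels (u1 ++ u2 ++ u3) -> n \notin labels (u1 ++ u2 ++ u3) ->
    let X := [:: tl m s; tl n (~~ s)] in
    let Y := if o then [:: hd m s; hd n (~~ s)] else [:: hd n (~~ s); hd m s] in
    rmove (u1 ++ u2 ++ u3)
          (u1 ++ (if p then X else Y) ++ u2 ++ (if p then Y else X) ++ u3)
| rm_R3 u1 u2 u3 u4 (P Q R T M B : gword) :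
    r3_triangle T M B -> perm_eq [:: P; Q; R] [:: T; M; B] ->
    rmove (u1 ++ P ++ u2 ++ Q ++ u3 ++ R ++ u4)
          (u1 ++ rev P ++ u2 ++ rev Q ++ u3 ++ rev R ++ u4).

Inductive fmove : gword -> gword -> Prop :=
| fm u v (x y : letter) : is_head x != is_head y -> lbl x != lbl y ->
    fmove (u ++ [:: x; y] ++ v) (u ++ [:: y; x] ++ v).

(* reach k w w' : w can be transformed into w' by a finite sequence of
   Reidemeister moves (classical; virtual ones are invisible on Gauss
   diagrams) and forbidden detour moves, using exactly k forbidden detour
   moves. *)
Inductive reach : nat -> gword -> gword -> Prop :=
| reach_refl w : reach 0 w w
| reach_R k w1 w2 w3 : rmove w1 w2 -> gauss_word w2 -> reach k w2 w3 -> reach k w1 w3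
| reach_F k w1 w2 w3 : fmove w1 w2 -> gauss_word w2 -> reach k w2 w3 -> reach k.+1 w1 w3.

From mathcomp Require Import all_boot all_algebra.
From mathcomp Require Import zify.
Set Implicit Arguments. Unset Strict Implicit. Unset Printing Implicit Defensive.

(* Take an innermost chord x ... y of the Gauss word: no arrow has both ends
   strictly between x and y, so the n letters in between carry distinct labels
   and n < c when c arrows remain.  With h the kind (head or tail) of x, sort
   the letters in between by F-moves, those of the other kind first (one move
   per inversion); then x moves right past them and y moves left past the rest
   (one move per letter), and the adjacent pair x y is deleted by an R1 move.
   This costs at most floor(n/2) ceil(n/2) + n moves; summing over c gives
   [detour_bound], whose closed form is the bound of the theorem. *)

Lemma reach_trans k1 k2 w1 w2 w3 :
  reach k1 w1 w2 -> reach k2 w2 w3 -> reach (k1 + k2) w1 w3.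
Proof.
elim=> [//|k {}w1 {}w2 w r gw _ IH|k {}w1 {}w2 w f gw _ IH] R.
- exact: reach_R r gw (IH R).
- exact: reach_F f gw (IH R).
Qed.

Lemma gauss_word_perm w w' : perm_eq w w' -> gauss_word w -> gauss_word w'.
Proof.
move=> pw gw n; rewrite /labels -(perm_mem (perm_map lbl pw)) => /gw [s cnt].
by exists s; rewrite -!(permP pw).
Qed.

Lemma gauss_word_filter_lbl m w :
  gauss_word w -> gauss_word [seq e <- w | lbl e != m].
Proof.
move=> gw n /mapP [e]; rewrite mem_filter => /andP [em ew] ->.
have [s] := gw _ (map_f lbl ew).
have keep_e (p : pred letter) : {in p, forall e', lbl e' == lbl e} ->
    count p [seq e <- w | lbl e != m] = count p w.
  move=> pn; rewrite count_filter; apply: eq_in_count => e' _ /=.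
  by case pe: (p e'); rewrite //= (eqP (pn e' pe)).
by case=> ct ch cl; exists s; rewrite !keep_e // => e' /eqP ->.
Qed.

Lemma size_gauss_word w : gauss_word w -> size w = (size (undup (labels w))).*2.
Proof.
move=> gw; rewrite -(size_map lbl) -/(labels w) -sum1_size.
rewrite -(big_undup_iterop_count addn (labels w) predT (fun=> 1)).
rewrite -addnn -!sum1_size -big_split /=; apply: eq_big_seq => n.
rewrite mem_undup => /gw [s [_ _ cl]].
by rewrite /labels count_map (eq_count (a2 := fun e => lbl e == n)) ?cl.
Qed.

Lemma reach_gauss_word k w1 w2 : reach k w1 w2 -> gauss_word w1 -> gauss_word w2.
Proof. by elim=> // ? ? w ? _ gw _ IH _; exact: IH. Qed.

Lemma fmove_perm w1 w2 : fmove w1 w2 -> perm_eq w1 w2.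
Proof.
by case=> u v x y _ _; rewrite perm_cat2l perm_cat2r (perm_catC [:: x] [:: y]).
Qed.

Lemma reach_fmove k w1 w2 w3 :
  gauss_word w1 -> fmove w1 w2 -> reach k w2 w3 -> reach k.+1 w1 w3.
Proof. by move=> gw f; apply: reach_F f (gauss_word_perm (fmove_perm f) gw). Qed.

Section Chord.

Variables (u s v : gword) (x y : letter).
Hypotheses (gw : gauss_word (u ++ x :: s ++ y :: v)) (lxy : lbl x = lbl y).

Let lbl_x_in : lbl x \in labels (u ++ x :: s ++ y :: v).
Proof. by rewrite map_f // mem_cat mem_head orbT. Qed.

Lemma chord_lbl_notin : lbl x \notin labels (u ++ s ++ v).
Proof.
have [sg [_ _]] := gw lbl_x_in.
rewrite !count_cat /= count_cat /= -lxy eqxx => cl.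
apply/negP => /mapP [e ein ex].
have : 0 < count (fun e => lbl e == lbl x) (u ++ s ++ v).
  by rewrite -has_count; apply/hasP; exists e; rewrite // ex.
by rewrite !count_cat; lia.
Qed.

Lemma chord_ends : is_head y = ~~ is_head x /\ sgnb y = sgnb x.
Proof.
have [sg [ct ch _]] := gw lbl_x_in.
have out t : lbl t = lbl x -> count_mem t (u ++ s ++ v) = 0.
  move=> lt; apply/count_memPn; apply: contra chord_lbl_notin => tin.
  by rewrite -lt map_f.
move: (out (tl (lbl x) sg) erefl) (out (hd (lbl x) sg) erefl) ct ch.
rewrite !count_cat /=; move: lxy; case: x => [[m hx] sx]; case: y => [[m' hy] sy].
rewrite /lbl /tl /hd /= => <-; rewrite count_cat /= count_cat /= !xpair_eqE !eqxx /=.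
case: hx; case: hy; case: (sx =P sg); case: (sy =P sg) => /= E1 E2; subst;
  by [split | lia].
Qed.

Lemma gauss_word_chord_del : gauss_word (u ++ s ++ v).
Proof.
have /all_filterP fid : all (fun e => lbl e != lbl x) (u ++ s ++ v).
  by apply/allP => e ein; apply: contraNneq chord_lbl_notin => <-; exact: map_f.
have := gauss_word_filter_lbl (m := lbl x) gw.
by rewrite !filter_cat /= filter_cat /= -{2}lxy eqxx /= -!filter_cat fid.
Qed.

End Chord.

Lemma innermost_chord w : ~~ uniq (labels w) ->
  exists u x s y v, [/\ w = u ++ x :: s ++ y :: v, lbl x = lbl y
                      & uniq (labels (x :: s))].
Proof.
elim: w => [//|a w IH] /=; rewrite negb_and negbK.
case: (boolP (uniq (labels w))) => [uw | /IH [u [x [s [y [v [-> lxy uxs]]]]]]];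
  last by exists (a :: u), x, s, y, v.
rewrite orbF => /mapP [y yw ay]; case/splitPr: yw uw => s v.
rewrite /labels map_cat cat_uniq /= negb_or => /and3P [us /andP [ys _] _].
by exists [::], a, s, y, v; rewrite /= ay ys us.
Qed.

Lemma reach_pass_right u a s v :
  gauss_word (u ++ a :: s ++ v) -> all (fun e => is_head e != is_head a) s ->
  lbl a \notin labels s -> reach (size s) (u ++ a :: s ++ v) (u ++ s ++ a :: v).
Proof.
elim: s u => [|b s IH] u gw; first by move=> *; exact: reach_refl.
rewrite /= in_cons negb_or => /andP [hb hs] /andP [ab ls].
have f : fmove (u ++ [:: a; b] ++ s ++ v) (u ++ [:: b; a] ++ s ++ v).
  by apply: fm; rewrite // eq_sym.
apply: (reach_fmove gw f).
have -> : u ++ [:: b; a] ++ s ++ v = rcons u b ++ a :: s ++ v by rewrite cat_rcons.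
have -> : u ++ b :: s ++ a :: v = rcons u b ++ s ++ a :: v by rewrite cat_rcons.
apply: IH => //; rewrite cat_rcons; exact: gauss_word_perm (fmove_perm f) gw.
Qed.

Lemma reach_pass_left u s a v :
  gauss_word (u ++ s ++ a :: v) -> all (fun e => is_head e != is_head a) s ->
  lbl a \notin labels s -> reach (size s) (u ++ s ++ a :: v) (u ++ a :: s ++ v).
Proof.
elim/last_ind: s v => [|s b IH] v gw; first by move=> *; exact: reach_refl.
rewrite all_rcons /labels map_rcons mem_rcons in_cons negb_or size_rcons.
move=> /andP [hb hs] /andP [ab ls].
have f : fmove ((u ++ s) ++ [:: b; a] ++ v) ((u ++ s) ++ [:: a; b] ++ v).
  by apply: fm; rewrite // eq_sym.
have -> : u ++ rcons s b ++ a :: v = (u ++ s) ++ [:: b; a] ++ v.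
  by rewrite -cats1 -!catA.
have {}gw : gauss_word ((u ++ s) ++ [:: b; a] ++ v) by move: gw; rewrite -cats1 -!catA.
apply: (reach_fmove gw f).
have -> : (u ++ s) ++ [:: a; b] ++ v = u ++ s ++ a :: b :: v by rewrite -catA.
have -> : u ++ a :: rcons s b ++ v = u ++ a :: s ++ b :: v by rewrite cat_rcons.
apply: IH => //; rewrite catA; exact: gauss_word_perm (fmove_perm f) gw.
Qed.

Fixpoint inversions (h : bool) (s : gword) : nat :=
  if s is a :: s' then
    (is_head a == h) * count (fun e => is_head e != h) s' + inversions h s'
  else 0.

Lemma inversions_le h s :
  inversions h s <=
    count (fun e => is_head e == h) s * count (fun e => is_head e != h) s.
Proof. by elim: s => //= a s IH; case: (is_head a == h) => /=; nia. Qed.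

Lemma reach_sort h u s v : gauss_word (u ++ s ++ v) -> uniq (labels s) ->
  reach (inversions h s) (u ++ s ++ v)
    (u ++ [seq e <- s | is_head e != h] ++ [seq e <- s | is_head e == h] ++ v).
Proof.
elim: s u => [|a s IH] u gw; first by move=> _; exact: reach_refl.
rewrite /= => /andP [la us].
have R : reach (inversions h s) (u ++ a :: s ++ v)
    (u ++ a :: [seq e <- s | is_head e != h] ++ [seq e <- s | is_head e == h] ++ v).
  by rewrite -!cat_rcons; apply: IH; rewrite ?cat_rcons.
case: (eqVneq (is_head a) h) => [ha | _] /=; last by rewrite mul0n.
rewrite mul1n -size_filter addnC; apply: (reach_trans R).
apply: reach_pass_right; first exact: reach_gauss_word R gw.
  by rewrite ha filter_all.
apply: contra la => /mapP [e]; rewrite mem_filter => /andP [_ es] ->.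
exact: map_f.
Qed.

Lemma perm_filter_heads h (s : gword) :
  perm_eq ([seq e <- s | is_head e != h] ++ [seq e <- s | is_head e == h]) s.
Proof.
have -> : [seq e <- s | is_head e == h] =
          [seq e <- s | predC (fun e => is_head e != h) e].
  by apply: eq_filter => e /=; rewrite negbK.
by rewrite perm_filterC.
Qed.

Lemma reach_remove_chord u x s y v :
  gauss_word (u ++ x :: s ++ y :: v) -> lbl x = lbl y -> uniq (labels (x :: s)) ->
  exists2 w', reach (inversions (is_head x) s + size s) (u ++ x :: s ++ y :: v) w'
            & perm_eq w' (u ++ s ++ v).
Proof.
move=> gw lxy; rewrite /= => /andP [xs us].
have [hy sy] := chord_ends gw lxy.
set h := is_head x in hy *.
set L := [seq e <- s | is_head e != h]; set H := [seq e <- s | is_head e == h].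
have x_notin_part (p : pred letter) : lbl x \notin labels [seq e <- s | p e].
  by apply: contra xs => /mapP [e]; rewrite mem_filter => /andP [_ es] ->; exact: map_f.
have R1 : reach (inversions h s) (u ++ x :: s ++ y :: v) (u ++ x :: L ++ H ++ y :: v).
  have := @reach_sort h (rcons u x) s (y :: v).
  by rewrite !cat_rcons; apply.
have R2 : reach (size L) (u ++ x :: L ++ H ++ y :: v) (u ++ L ++ x :: H ++ y :: v).
  apply: reach_pass_right; last exact: x_notin_part.
    exact: reach_gauss_word R1 gw.
  exact: filter_all.
have R3 : reach (size H) (u ++ L ++ x :: H ++ y :: v) (u ++ L ++ x :: y :: H ++ v).
  have := @reach_pass_left (u ++ L ++ [:: x]) H y v; rewrite -!catA /=; apply.
  - exact: reach_gauss_word R2 (reach_gauss_word R1 gw).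
  - by apply/allP => e; rewrite mem_filter hy => /andP [/eqP -> _]; case: (h).
  - by rewrite -lxy x_notin_part.
have LHs : perm_eq (u ++ L ++ H ++ v) (u ++ s ++ v).
  by rewrite perm_cat2l catA perm_cat2r perm_filter_heads.
have letterE (e : letter) : e = (lbl e, is_head e, sgnb e) by case: e => [[]].
have xE : x = (lbl x, h, sgnb x) by exact: letterE.
have yE : y = (lbl x, ~~ h, sgnb x) by rewrite -hy -sy lxy; exact: letterE.
have R4 : reach 0 (u ++ L ++ x :: y :: H ++ v) (u ++ L ++ H ++ v).
  apply: (reach_R _ _ (reach_refl _)); last first.
    by apply: gauss_word_perm (gauss_word_chord_del gw lxy); rewrite perm_sym.
  have -> : u ++ L ++ x :: y :: H ++ v = (u ++ L) ++ [:: x; y] ++ H ++ v.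
    by rewrite -catA.
  rewrite [u ++ L ++ H ++ v]catA xE yE; exact: rm_R1_del.
exists (u ++ L ++ H ++ v) => //.
have -> : size s = size L + size H.
  by rewrite -size_cat (perm_size (perm_filter_heads h s)).
rewrite -[_ + size H]addn0 !addnA.
exact: reach_trans (reach_trans (reach_trans R1 R2) R3) R4.
Qed.

Lemma leq_mul_half_uphalf a b n : a + b <= n -> a * b <= n./2 * uphalf n.
Proof.
move=> abn; have amgm : 4 * (a * b) <= n ^ 2.
  by apply: leq_trans (nat_AGM2 a b).1 _; rewrite leq_sqr.
move: amgm; rewrite uphalf_half; have := odd_double_half n.
by case: odd => /= <-; nia.
Qed.

Fixpoint detour_bound (c : nat) : nat :=
  if c is c'.+1 then detour_bound c' + c'./2 * uphalf c' + c' else 0.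

Lemma detour_bound_closed c :
  24 * detour_bound c = if odd c then (c - 1) * (2 * c ^ 2 + 11 * c - 3)
                        else c * (2 * c ^ 2 + 9 * c - 14).
Proof.
elim: c => [|c IH] //=; rewrite !mulnDr IH uphalf_half.
by have := odd_double_half c; case: odd => /= <-; rewrite -mul2n; nia.
Qed.

Lemma reach_trivial_gword c w : gauss_word w -> size w = c.*2 ->
  exists2 k, reach k w trivial_gword & k <= detour_bound c.
Proof.
elim: c w => [|c IH] w gw sw.
  by case: w sw gw => // _ _; exists 0 => //; exact: reach_refl.
have : ~~ uniq (labels w).
  case: w sw gw => // a w _ gw; apply/negP => uw.
  have la := mem_head (lbl a) (labels w).
  have [_ [_ _ cl]] := gw _ la.
  by have := count_uniq_mem (lbl a) uw; rewrite la count_map cl.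
case/innermost_chord => u [x [s [y [v [wE lxy uxs]]]]]; subst w.
have [w' R pw'] := reach_remove_chord gw lxy uxs.
have [|k Rk kb] := IH w' (reach_gauss_word R gw).
  rewrite (perm_size pw'); move: sw.
  by rewrite !size_cat /= size_cat /= doubleS !addnS => -[].
exists (inversions (is_head x) s + size s + k); first exact: reach_trans R Rk.
have ss : size s <= c.
  rewrite -ltnS; have := size_gauss_word gw; rewrite sw => /double_inj ->.
  have := uniq_leq_size uxs; rewrite size_map /=; apply => z.
  rewrite mem_undup /labels map_cat /= map_cat !mem_cat !in_cons.
  by case/orP => [-> | zs]; rewrite ?orbT // mem_cat zs !(orbT, orTb).
have : inversions (is_head x) s <= c./2 * uphalf c.
  apply: leq_trans (inversions_le _ _) (leq_mul_half_uphalf _).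
  exact: leq_trans (eq_leq (count_predC _ s)) ss.
rewrite /=; lia.
Qed.

Theorem theorem1p1 (c : nat) (w : gword) :
  gauss_word w -> size w = c.*2 ->
  exists k : nat, reach k w trivial_gword /\
    (if odd c then 24 * k <= (c - 1) * (2 * c ^ 2 + 11 * c - 3)
     else 24 * k <= c * (2 * c ^ 2 + 9 * c - 14)).
Proof.
move=> gw sw; have [k R kb] := reach_trivial_gword gw sw.
exists k; split => //.
have : 24 * k <= 24 * detour_bound c by rewrite leq_mul2l kb orbT.
by rewrite detour_bound_closed; case: ifP.
Qed.
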